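(* Every hyperlogarithm of type $\mathcal M_{0,5}$, $L(\varphi;z_1)$ with $\varphi$ a word in $S^0(A^{(1)}_{1\otimes2})$, is a single-valued holomorphic function of $(z_1,z_2)$ on some neighbourhood of $\{(z_1,z_2)\in\mathbf P^1\times\mathbf P^1: |z_1|<1,|z_2|<1\}\cup\{(0,1)\}$. In particular, if $|z_1|$ is small enough, it can be continued analytically with respect to the parameter $z_2$ from $z_2=0$ to $z_2=1$.
   Context: Let $\zeta_1=dz_1/z_1$, $\zeta_{11}=dz_1/(1-z_1)$, $\zeta^{(1)}_{12}=z_2dz_1/(1-z_1z_2)$, regarded as 1-forms in $z_1$ with $z_2$ a parameter. $S^0(A^{(1)}_{1\otimes2})$ is the span of words $\varphi=\zeta_1^{k_1-1}\circ\omega_1\circ\cdots\circ\zeta_1^{k_r-1}\circ\omega_r$ with $\omega_m\in\{\zeta_{11},\zeta^{(1)}_{12}\}$, $k_m\ge1$ (words not ending in $\zeta_1$), and the empty word. For such $\varphi$, $L(\varphi;z_1)=\int_0^{z_1}\varphi$ is the iterated integral ($\int_0^z\omega_1\circ\cdots\circ\omega_r=\int_0^z\omega_1(t)\int_0^t\omega_2\circ\cdots\circ\omega_r$, $\int\mathbf 1=1$); for small $|z_1|$ it equals $\sum_{n_1>\cdots>n_r>0}\frac{\alpha_1^{n_1-n_2}\cdots\alpha_r^{n_r}}{n_1^{k_1}\cdots n_r^{k_r}}z_1^{n_1}$ with $\alpha_m=1$ if $\omega_m=\zeta_{11}$ and $\alpha_m=z_2$ if $\omega_m=\zeta^{(1)}_{12}$.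 *)

From Stdlib Require Import Reals List.
From Coquelicot Require Import Coquelicot.
Open Scope C_scope.

(* The two non-ζ1 letters: ω = ζ_{11} = dz1/(1-z1), ω = ζ^{(1)}_{12} = z2 dz1/(1-z1 z2). *)
Inductive letter := zeta11 | zeta12.

(* A word φ = ζ1^{k1-1}∘ω1∘ ... ∘ζ1^{kr-1}∘ωr of S^0(A^{(1)}_{1⊗2}) is encoded
   as the list [(k1-1, ω1); ...; (kr-1, ωr)]; the empty list is the empty word.
   (Every such list is a word not ending in ζ1, and conversely.) *)
Definition word := list (nat * letter).

Definition alpha (o : letter) (z2 : C) : C :=
  match o with zeta11 => 1 | zeta12 => z2 end.

(* coef w z2 n = coefficient of z1^n in
   Σ_{n1>...>nr>0} α1^{n1-n2}...αr^{nr} / (n1^{k1}...nr^{kr}) z1^{n1},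
   computed recursively (convention n_{r+1} = 0):
   coef [] n = [n = 0];
   coef ((j,ω)::w) n = [n>0] / n^{j+1} * Σ_{m<n} α^{n-m} coef w m. *)
Fixpoint coef (w : word) (z2 : C) (n : nat) : C :=
  match w with
  | nil => match n with O => 1 | S _ => 0 end
  | (j, o) :: w' =>
      match n with
      | O => 0
      | S _ => / (RtoC (INR n) ^ (S j)) *
               sum_n (fun m => if Nat.ltb m n
                               then alpha o z2 ^ (n - m) * coef w' z2 m
                               else RtoC 0) n
      end
  end.

Definition is_hyperlog (w : word) (z1 z2 : C) (l : C) : Prop :=
  is_series (fun n => coef w z2 n * z1 ^ n) l.

(* Holomorphy in two complex variables on an open set U ⊆ C × C
   (Osgood's definition: continuous and complex-differentiable in each variable). *)
Definition holomorphic2_on (U : C * C -> Prop) (F : C * C -> C) : Prop :=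
  open (T := prod_UniformSpace C_UniformSpace C_UniformSpace) U /\
  forall p : C * C, U p ->
    continuous (T := prod_UniformSpace C_UniformSpace C_UniformSpace)
               (U := C_UniformSpace) F p /\
    ex_derive (K := C_AbsRing) (V := C_NormedModule) (fun w => F (w, snd p)) (fst p) /\
    ex_derive (K := C_AbsRing) (V := C_NormedModule) (fun w => F (fst p, w)) (snd p).

From Stdlib Require Import Reals Lra Psatz IndefiniteDescription.
From Coquelicot Require Import Coquelicot.
Open Scope C_scope.

(* The coefficient of [z1^n] is a polynomial of degree at most [n] in [z2],
   bounded by [max(1,|z2|)^n]: the factor [1/n^k] in its recursion absorbs the
   [n] terms of the inner sum. Bernstein-type estimates propagate through the
   same recursion, so on a polydisk [|z1| <= r1], [|z2| <= r2] with [r2 >= 1]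
   and [r1 r2 < 1] every term of the series, its derivative in either variable
   and its second-order Taylor remainder are dominated by the summable
   [(n+1)(n+2)(r1 r2)^n]. Term-wise differentiation then makes the sum
   holomorphic on [|z1| max(1,|z2|) < 1], a neighbourhood of the bidisk and of
   the segment [{0} x [0,1]]. *)

(** * Polynomial estimates on a disk *)

(* The estimates on the closed disk of radius [r] of a polynomial of degree [n]
   bounded by [M r^n]. They are stable under sums, scalings and products
   (degrees add), which is all that the recursion defining [coef] uses. *)
Definition poly_estimates (r : R) (n : nat) (M : R) (f : C -> C) : Prop :=
  (0 <= M)%R /\ exists f' : C -> C, forall x y, (Cmod x <= r)%R -> (Cmod y <= r)%R ->
   (Cmod (f x) <= M * r ^ n)%R /\
   (r * Cmod (f' x) <= M * INR n * r ^ n)%R /\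
   (r * Cmod (f y - f x) <= M * INR n * r ^ n * Cmod (y - x))%R /\
   (r ^ 2 * Cmod (f y - f x - f' x * (y - x)) <= M * INR n ^ 2 * r ^ n * Cmod (y - x) ^ 2)%R.

Lemma poly_estimates_le r n M M' f :
  (M <= M')%R -> (0 <= r)%R -> poly_estimates r n M f -> poly_estimates r n M' f.
Proof.
  intros HM Hr [HM0 [f' Hf]]. split; [lra|]. exists f'. intros x y Hx Hy.
  destruct (Hf x y Hx Hy) as (H1 & H2 & H3 & H4).
  assert (0 <= r ^ n)%R by (apply pow_le; lra).
  pose proof (pos_INR n). pose proof (Cmod_ge_0 (y - x)).
  assert (0 <= INR n * r ^ n)%R by nra.
  assert (0 <= INR n * r ^ n * Cmod (y - x))%R by nra.
  assert (0 <= INR n ^ 2 * r ^ n * Cmod (y - x) ^ 2)%R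
    by (repeat apply Rmult_le_pos; try apply pow2_ge_0; lra).
  repeat split; nra.
Qed.

Lemma poly_estimates_ext r n M f g :
  (forall z, f z = g z) -> poly_estimates r n M f -> poly_estimates r n M g.
Proof.
  intros E [HM [f' Hf]]. split; [lra|]. exists f'. intros x y Hx Hy. rewrite <- !E. auto.
Qed.

Lemma poly_estimates_zero r n : poly_estimates r n 0 (fun _ => 0).
Proof.
  split; [lra|]. exists (fun _ => 0). intros x y _ _.
  replace (0 - 0 : C) with (0 : C) by ring. replace (0 - 0 * (y - x) : C) with (0 : C) by ring.
  rewrite Cmod_0. repeat split; nra.
Qed.

Lemma poly_estimates_const r k c : (Cmod c <= r ^ k)%R -> poly_estimates r k 1 (fun _ => c).
Proof.
  intros Hc. split; [lra|]. exists (fun _ => 0). intros x y Hx Hy.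
  assert (Hr : (0 <= r)%R) by (pose proof (Cmod_ge_0 x); lra).
  assert (0 <= r ^ k)%R by (apply pow_le; lra).
  pose proof (pos_INR k). pose proof (Cmod_ge_0 (y - x)).
  assert (0 <= INR k * r ^ k * Cmod (y - x))%R by (repeat apply Rmult_le_pos; lra).
  assert (0 <= INR k ^ 2 * r ^ k * Cmod (y - x) ^ 2)%R
    by (repeat apply Rmult_le_pos; try apply pow2_ge_0; lra).
  replace (c - c : C) with (0 : C) by ring. replace (0 - 0 * (y - x) : C) with (0 : C) by ring.
  rewrite Cmod_0. repeat split; nra.
Qed.

Lemma poly_estimates_id r : (0 <= r)%R -> poly_estimates r 1 1 (fun z => z).
Proof.
  intros Hr. split; [lra|]. exists (fun _ => 1). intros x y Hx Hy.
  replace (y - x - 1 * (y - x) : C) with (0 : C) by ring.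
  rewrite Cmod_0, Cmod_1. simpl. repeat split; nra.
Qed.

Lemma poly_estimates_scal r n M c f :
  poly_estimates r n M f -> poly_estimates r n (Cmod c * M) (fun z => c * f z).
Proof.
  intros [HM0 [f' Hf]]. pose proof (Cmod_ge_0 c).
  split; [nra|]. exists (fun z => c * f' z). intros x y Hx Hy.
  destruct (Hf x y Hx Hy) as (H1 & H2 & H3 & H4).
  replace (c * f y - c * f x - c * f' x * (y - x))
    with (c * (f y - f x - f' x * (y - x))) by ring.
  replace (c * f y - c * f x) with (c * (f y - f x)) by ring.
  rewrite !Cmod_mult. repeat split; nra.
Qed.

Lemma poly_estimates_plus r n M1 M2 f g :
  poly_estimates r n M1 f -> poly_estimates r n M2 g ->
  poly_estimates r n (M1 + M2) (fun z => f z + g z).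
Proof.
  intros [HM1 [f' Hf]] [HM2 [g' Hg]]. split; [lra|].
  exists (fun z => f' z + g' z). intros x y Hx Hy.
  destruct (Hf x y Hx Hy) as (H1 & H2 & H3 & H4).
  destruct (Hg x y Hx Hy) as (G1 & G2 & G3 & G4).
  assert (Hr : (0 <= r)%R) by (pose proof (Cmod_ge_0 x); lra).
  pose proof (Cmod_triangle (f x) (g x)).
  pose proof (Cmod_triangle (f' x) (g' x)).
  pose proof (Cmod_triangle (f y - f x) (g y - g x)).
  pose proof (Cmod_triangle (f y - f x - f' x * (y - x)) (g y - g x - g' x * (y - x))).
  replace (f y + g y - (f x + g x) - (f' x + g' x) * (y - x))
    with ((f y - f x - f' x * (y - x)) + (g y - g x - g' x * (y - x))) by ring.
  replace (f y + g y - (f x + g x)) with ((f y - f x) + (g y - g x)) by ring.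
  repeat split; nra.
Qed.

Lemma Cmod_mult_remainder_le (fx fy f'x gx gy g'x h : C) :
  (Cmod (fy * gy - fx * gx - (f'x * gx + fx * g'x) * h) <=
   Cmod fy * Cmod (gy - gx - g'x * h) + Cmod (fy - fx) * Cmod g'x * Cmod h
   + Cmod gx * Cmod (fy - fx - f'x * h))%R.
Proof.
  replace (fy * gy - fx * gx - (f'x * gx + fx * g'x) * h)
    with (fy * (gy - gx - g'x * h) + (fy - fx) * g'x * h + gx * (fy - fx - f'x * h)) by ring.
  rewrite <- !Cmod_mult.
  eapply Rle_trans; [apply Cmod_triangle|].
  apply Rplus_le_compat_r, Cmod_triangle.
Qed.

Lemma poly_estimates_mult r a b M1 M2 f g :
  poly_estimates r a M1 f -> poly_estimates r b M2 g ->
  poly_estimates r (a + b) (M1 * M2) (fun z => f z * g z).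
Proof.
  intros [HM1 [f' Hf]] [HM2 [g' Hg]]. split; [nra|].
  exists (fun z => f' z * g z + f z * g' z). intros x y Hx Hy.
  destruct (Hf x y Hx Hy) as (H1 & H2 & H3 & H4).
  destruct (Hg x y Hx Hy) as (G1 & G2 & G3 & G4).
  destruct (Hf y x Hy Hx) as (H1' & _).
  assert (Hr : (0 <= r)%R) by (pose proof (Cmod_ge_0 x); lra).
  rewrite pow_add, plus_INR.
  set (P := (r ^ a)%R) in *. set (Q := (r ^ b)%R) in *.
  set (A := INR a) in *. set (B := INR b) in *. set (h := Cmod (y - x)) in *.
  assert (0 <= P)%R by (apply pow_le; lra). assert (0 <= Q)%R by (apply pow_le; lra).
  assert (0 <= A)%R by apply pos_INR. assert (0 <= B)%R by apply pos_INR.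
  assert (0 <= h)%R by apply Cmod_ge_0.
  pose proof (Cmod_ge_0 (f x)). pose proof (Cmod_ge_0 (g x)). pose proof (Cmod_ge_0 (f y)).
  pose proof (Cmod_ge_0 (f' x)). pose proof (Cmod_ge_0 (g' x)).
  pose proof (Cmod_ge_0 (f y - f x)). pose proof (Cmod_ge_0 (g y - g x)).
  repeat split.
  - rewrite Cmod_mult.
    replace (M1 * M2 * (P * Q))%R with ((M1 * P) * (M2 * Q))%R by ring.
    apply Rmult_le_compat; lra.
  - pose proof (Cmod_triangle (f' x * g x) (f x * g' x)) as Hder.
    rewrite !Cmod_mult in Hder.
    assert (r * Cmod (f' x) * Cmod (g x) <= (M1 * A * P) * (M2 * Q))%R
      by (apply Rmult_le_compat; nra).
    assert (Cmod (f x) * (r * Cmod (g' x)) <= (M1 * P) * (M2 * B * Q))%R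
      by (apply Rmult_le_compat; nra).
    nra.
  - replace (f y * g y - f x * g x) with (f y * (g y - g x) + g x * (f y - f x)) by ring.
    pose proof (Cmod_triangle (f y * (g y - g x)) (g x * (f y - f x))) as Hdiff.
    rewrite !Cmod_mult in Hdiff.
    assert (Cmod (f y) * (r * Cmod (g y - g x)) <= (M1 * P) * (M2 * B * Q * h))%R
      by (apply Rmult_le_compat; nra).
    assert (Cmod (g x) * (r * Cmod (f y - f x)) <= (M2 * Q) * (M1 * A * P * h))%R
      by (apply Rmult_le_compat; nra).
    nra.
  - pose proof (Cmod_mult_remainder_le (f x) (f y) (f' x) (g x) (g y) (g' x) (y - x)) as Hrem.
    fold h in Hrem.
    pose proof (Cmod_ge_0 (f y - f x - f' x * (y - x))).
    pose proof (Cmod_ge_0 (g y - g x - g' x * (y - x))).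
    assert (0 <= M1 * M2 * P * Q * h ^ 2 * A * B)%R by (repeat apply Rmult_le_pos; nra).
    assert (Cmod (f y) * (r ^ 2 * Cmod (g y - g x - g' x * (y - x)))
            <= (M1 * P) * (M2 * B ^ 2 * Q * h ^ 2))%R by (apply Rmult_le_compat; nra).
    assert ((r * Cmod (f y - f x)) * (r * Cmod (g' x)) <= (M1 * A * P * h) * (M2 * B * Q))%R
      by (apply Rmult_le_compat; nra).
    assert (Cmod (g x) * (r ^ 2 * Cmod (f y - f x - f' x * (y - x)))
            <= (M2 * Q) * (M1 * A ^ 2 * P * h ^ 2))%R by (apply Rmult_le_compat; nra).
    nra.
Qed.

Lemma poly_estimates_pow r n : (0 <= r)%R -> poly_estimates r n 1 (fun z => z ^ n).
Proof.
  intros Hr. induction n as [|n IHn].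
  - apply (poly_estimates_const r 0 1). rewrite Cmod_1. simpl. lra.
  - apply (poly_estimates_le _ _ (1 * 1)); [lra|lra|].
    apply (poly_estimates_mult r 1 n 1 1 (fun z => z) (fun z => z ^ n)); auto.
    apply poly_estimates_id; auto.
Qed.

Lemma poly_estimates_sum_n r n (M : nat -> R) (g : nat -> C -> C) N :
  (forall m, poly_estimates r n (M m) (g m)) ->
  poly_estimates r n (sum_n M N) (fun z => sum_n (fun m => g m z) N).
Proof.
  intros H. induction N as [|N IHN].
  - rewrite sum_O. apply (poly_estimates_ext _ _ _ (g 0%nat)); [intros; now rewrite sum_O|auto].
  - rewrite sum_Sn. apply (poly_estimates_ext _ _ _ (fun z => sum_n (fun m => g m z) N + g (S N) z)).
    + intros; now rewrite sum_Sn.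
    + apply poly_estimates_plus; auto.
Qed.

Lemma sum_n_ltb_le N n : (N <= n)%nat ->
  sum_n (fun m => if Nat.ltb m n then 1%R else 0%R) N = INR (Nat.min (S N) n).
Proof.
  induction N as [|N IHN]; intros H.
  - rewrite sum_O. destruct (Nat.ltb_spec 0 n) as [Hn|Hn].
    + replace (Nat.min 1 n) with 1%nat by lia. reflexivity.
    + replace n with 0%nat by lia. reflexivity.
  - rewrite sum_Sn, IHN by lia. change (plus ?a ?b) with (a + b)%R.
    destruct (Nat.ltb_spec (S N) n).
    + replace (Nat.min (S (S N)) n) with (S (S N)) by lia.
      replace (Nat.min (S N) n) with (S N) by lia. rewrite (S_INR (S N)). reflexivity.
    + replace (Nat.min (S (S N)) n) with n by lia.
      replace (Nat.min (S N) n) with n by lia. lra.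
Qed.

Lemma poly_estimates_alpha_pow r o k : (1 <= r)%R -> poly_estimates r k 1 (fun z => alpha o z ^ k).
Proof.
  intros Hr. destruct o; simpl.
  - apply (poly_estimates_ext _ _ _ (fun _ => 1)); [intros; now rewrite Cpow_1_l|].
    apply poly_estimates_const. rewrite Cmod_1. apply pow_R1_Rle; lra.
  - apply poly_estimates_pow; lra.
Qed.

Lemma poly_estimates_coef w n r : (1 <= r)%R -> poly_estimates r n 1 (fun z => coef w z n).
Proof.
  revert n. induction w as [|[j o] w IH]; intros n Hr.
  - destruct n; simpl.
    + apply poly_estimates_const. rewrite Cmod_1. simpl; lra.
    + apply (poly_estimates_le _ _ 0); [lra|lra|]. apply poly_estimates_zero.
  - destruct n as [|k].
    + simpl. apply (poly_estimates_le _ _ 0); [lra|lra|]. apply poly_estimates_zero.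
    + set (n := S k).
      change (poly_estimates r n 1 (fun z => / (RtoC (INR n) ^ (S j)) *
               sum_n (fun m => if Nat.ltb m n
                               then alpha o z ^ (n - m) * coef w z m
                               else RtoC 0) n)).
      assert (Hsum : poly_estimates r n (INR n)
         (fun z => sum_n (fun m => if Nat.ltb m n
                               then alpha o z ^ (n - m) * coef w z m
                               else RtoC 0) n)).
      { replace (INR n) with (sum_n (fun m => if Nat.ltb m n then 1%R else 0%R) n)
          by (rewrite sum_n_ltb_le by lia; f_equal; lia).
        apply (poly_estimates_sum_n r n (fun m => if Nat.ltb m n then 1%R else 0%R)
          (fun m z => if Nat.ltb m n then alpha o z ^ (n - m) * coef w z m else RtoC 0)).
        intros m. destruct (Nat.ltb_spec m n).
        - replace n with ((n - m) + m)%nat at 1 by lia.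
          apply (poly_estimates_le _ _ (1 * 1)); [lra|lra|].
          apply poly_estimates_mult; [apply poly_estimates_alpha_pow|apply IH]; lra.
        - apply poly_estimates_zero. }
      apply (poly_estimates_scal _ _ _ (/ (RtoC (INR n) ^ (S j)))) in Hsum.
      eapply poly_estimates_le; [|lra|exact Hsum].
      assert (Hn : (1 <= INR n)%R) by (apply (le_INR 1); unfold n; lia).
      rewrite <- RtoC_pow, <- RtoC_inv, Cmod_R, Rabs_right.
      2: { apply Rle_ge, Rlt_le, Rinv_0_lt_compat, pow_lt; lra. }
      assert (1 <= INR n ^ j)%R by (apply pow_R1_Rle; lra).
      rewrite <- tech_pow_Rmult, Rinv_mult.
      replace (/ INR n * / INR n ^ j * INR n)%R with (/ INR n ^ j)%R by (field; lra).
      rewrite <- Rinv_1. apply Rinv_le_contravar; lra.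
      apply pow_nonzero; lra.
Qed.

Lemma Cmod_coef_le w z n r : (1 <= r)%R -> (Cmod z <= r)%R -> (Cmod (coef w z n) <= r ^ n)%R.
Proof.
  intros Hr Hz. destruct (poly_estimates_coef w n r Hr) as [_ [f' Hf]].
  destruct (Hf z z Hz Hz) as [H _]. lra.
Qed.

(** * Term-wise differentiation of series of functions *)

Definition taylor_dominated (r K : R) (g : C -> C) : Prop :=
  exists g' : C -> C, forall x y, (Cmod x <= r)%R -> (Cmod y <= r)%R ->
   (r * Cmod (g' x) <= K)%R /\
   (r * Cmod (g y - g x) <= K * Cmod (y - x))%R /\
   (r ^ 2 * Cmod (g y - g x - g' x * (y - x)) <= K * Cmod (y - x) ^ 2)%R.

(* The coefficients of the second derivative of the geometric series. *)
Definition quad_geom (q : R) (n : nat) : R := (INR (S n) * INR (S (S n)) * q ^ n)%R.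

Lemma ex_series_quad_geom q : (0 <= q < 1)%R -> ex_series (quad_geom q).
Proof.
  intros Hq.
  assert (Hr : CV_radius (fun _ => 1%R) = 1%R).
  { rewrite (CV_radius_finite_DAlembert _ 1); [f_equal; lra| |lra|].
    - intros; lra.
    - eapply is_lim_seq_ext; [|apply is_lim_seq_const]. intros n. simpl.
      rewrite Rdiv_1_r, Rabs_R1. reflexivity. }
  assert (Hin : Rbar_lt (Rabs q) (CV_radius (PS_derive (PS_derive (fun _ => 1%R))))).
  { rewrite !CV_radius_derive, Hr. simpl. rewrite Rabs_right; lra. }
  apply CV_disk_inside in Hin.
  eapply ex_series_ext; [|exact Hin].
  intros n. unfold PS_derive, quad_geom. rewrite Rabs_right; [rewrite Rmult_1_r; reflexivity|].
  apply Rle_ge. repeat apply Rmult_le_pos; try apply pos_INR; try lra. apply pow_le; lra.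
Qed.

Lemma Series_quad_geom_ge0 q : (0 <= q < 1)%R -> (0 <= Series (quad_geom q))%R.
Proof.
  intros Hq.
  replace 0%R with (Series (fun n => 0 * quad_geom q n))%R by (rewrite Series_scal_l; ring).
  apply Series_le; [|now apply ex_series_quad_geom].
  intros n. unfold quad_geom. pose proof (pow_le q n). pose proof (pos_INR (S n)).
  pose proof (pos_INR (S (S n))). split; [lra|]. rewrite Rmult_0_l.
  repeat apply Rmult_le_pos; lra.
Qed.

Lemma poly_estimates_taylor_dominated r n M f q :
  (0 <= r)%R -> (0 <= q)%R -> (M * r ^ n <= q ^ n)%R ->
  poly_estimates r n M f -> taylor_dominated r (quad_geom q n) f.
Proof.
  intros Hr Hq HMq [HM [f' Hf]]. exists f'. intros x y Hx Hy.
  destruct (Hf x y Hx Hy) as (_ & H2 & H3 & H4).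
  unfold quad_geom. rewrite !S_INR.
  pose proof (pos_INR n). pose proof (Cmod_ge_0 (y - x)). pose proof (pow2_ge_0 (Cmod (y - x))).
  assert (0 <= M * r ^ n)%R by (apply Rmult_le_pos; [lra|apply pow_le; lra]).
  assert (INR n * (M * r ^ n) <= (INR n + 1) * (INR n + 1 + 1) * q ^ n)%R by nra.
  assert (INR n ^ 2 * (M * r ^ n) <= (INR n + 1) * (INR n + 1 + 1) * q ^ n)%R by nra.
  repeat split; nra.
Qed.

Lemma series_norm_le (a : nat -> C) (b : nat -> R) (l : C) :
  is_series a l -> ex_series b -> (forall n, (Cmod (a n) <= b n)%R) -> (Cmod l <= Series b)%R.
Proof.
  intros Ha Hb Hab.
  assert (H1 : filterlim (fun N => Cmod (sum_n a N)) eventually (locally (Cmod l))).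
  { eapply filterlim_comp; [exact Ha|].
    apply (filterlim_norm (K := C_AbsRing) (V := C_NormedModule)). }
  pose proof (filterlim_le (F := eventually) (fun N => Cmod (sum_n a N)) (sum_n b)
    (Cmod l) (Series b)) as Hle.
  simpl in Hle. apply Hle; [|exact H1|apply Series_correct, Hb].
  exists 0%nat. intros N _.
  eapply Rle_trans; [apply (norm_sum_n_m (K := C_AbsRing) (V := C_NormedModule))|].
  apply sum_n_m_le. intros k. apply Hab.
Qed.

Lemma series_norm_minus_le (a b : nat -> C) (la lb : C) (K : nat -> R) (c : R) :
  is_series a la -> is_series b lb -> ex_series K ->
  (forall n, (Cmod (a n - b n) <= K n * c)%R) -> (Cmod (la - lb) <= Series K * c)%R.
Proof.
  intros Ha Hb HK H. rewrite <- Series_scal_r.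
  apply (series_norm_le (fun n => a n - b n)); auto.
  - apply (is_series_minus a b la lb Ha Hb).
  - apply ex_series_scal_r, HK.
Qed.

Lemma is_derive_of_remainder_le (f : C -> C) (x D : C) (d S : R) : (0 < d)%R ->
  (forall y, (Cmod (y - x) < d)%R ->
     (Cmod (f y - f x - (y - x) * D) <= S * Cmod (y - x) ^ 2)%R) ->
  is_derive f x D.
Proof.
  intros Hd Hrem. split; [apply is_linear_scal_l|].
  intros x' Hx'.
  apply (is_filter_lim_locally_unique (K := C_AbsRing) (V := AbsRing_NormedModule C_AbsRing)) in Hx'.
  subst x'. intros eps. pose proof (cond_pos eps). pose proof (Rabs_pos S). pose proof (Rle_abs S).
  assert (Hdel : (0 < Rmin d (eps / (Rabs S + 1)))%R)
    by (apply Rmin_pos; [lra|apply Rdiv_lt_0_compat; lra]).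
  exists (mkposreal _ Hdel). intros y Hy.
  change (Cmod (f y - f x - (y - x) * D) <= eps * Cmod (y - x))%R.
  change (Cmod (y - x) < Rmin d (eps / (Rabs S + 1)))%R in Hy.
  set (h := Cmod (y - x)) in *.
  assert (0 <= h)%R by apply Cmod_ge_0.
  assert (Hh1 : (h < d)%R) by (eapply Rlt_le_trans; [exact Hy|apply Rmin_l]).
  assert (Hh2 : (h * (Rabs S + 1) < eps)%R).
  { pose proof (Rlt_le_trans _ _ _ Hy (Rmin_r d (eps / (Rabs S + 1)))) as H'.
    apply (Rmult_lt_compat_r (Rabs S + 1)) in H'; [|lra].
    unfold Rdiv in H'. rewrite Rmult_assoc, Rinv_l, Rmult_1_r in H'; lra. }
  assert (S * h ^ 2 <= h * (Rabs S + 1) * h)%R by nra.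
  assert (h * (Rabs S + 1) * h <= eps * h)%R by (apply Rmult_le_compat_r; lra).
  pose proof (Hrem y Hh1) as HR. fold h in HR. lra.
Qed.

Section DominatedSeries.

Variables (T : nat -> C -> C) (f : C -> C) (r : R) (K : nat -> R).
Hypothesis r_pos : (0 < r)%R.
Hypothesis K_summable : ex_series K.
Hypothesis f_series : forall y, (Cmod y <= r)%R -> is_series (fun n => T n y) (f y).
Hypothesis T_dominated : forall n, taylor_dominated r (K n) (T n).

Lemma series_lipschitz x y : (Cmod x <= r)%R -> (Cmod y <= r)%R ->
  (r * Cmod (f y - f x) <= Series K * Cmod (y - x))%R.
Proof.
  intros Hx Hy.
  assert (Hb : (Cmod (f y - f x) <= Series K * (Cmod (y - x) / r))%R).
  { apply (series_norm_minus_le (fun n => T n y) (fun n => T n x)); auto.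
    intros n. destruct (T_dominated n) as [g' Hg].
    destruct (Hg x y Hx Hy) as (_ & H & _).
    apply (Rmult_le_reg_l r); [lra|]. field_simplify; lra. }
  apply (Rmult_le_compat_l r) in Hb; [|lra].
  replace (r * (Series K * (Cmod (y - x) / r)))%R with (Series K * Cmod (y - x))%R in Hb
    by (field; lra).
  exact Hb.
Qed.

Lemma series_taylor_remainder x : (Cmod x <= r)%R ->
  exists D, forall y, (Cmod y <= r)%R ->
    (r ^ 2 * Cmod (f y - f x - (y - x) * D) <= Series K * Cmod (y - x) ^ 2)%R.
Proof.
  intros Hx.
  pose proof T_dominated as HT. unfold taylor_dominated in HT.
  apply functional_choice in HT. destruct HT as [T' HT'].
  assert (HD : ex_series (fun n => T' n x)).
  { apply (ex_series_le (K := C_AbsRing) (V := C_CompleteNormedModule) _ (fun n => K n * / r)%R).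
    - intros n. change (Cmod (T' n x) <= K n * / r)%R.
      destruct (HT' n x x) as [H _]; try lra.
      apply (Rmult_le_reg_l r); [lra|]. field_simplify; lra.
    - apply ex_series_scal_r, K_summable. }
  destruct HD as [D HD]. exists D. intros y Hy.
  assert (Hr2 : (0 < r ^ 2)%R) by (apply pow_lt; lra).
  assert (Hb : (Cmod (f y - f x - (y - x) * D) <= Series K * (Cmod (y - x) ^ 2 / r ^ 2))%R).
  { apply (series_norm_minus_le (fun n => T n y - T n x) (fun n => T' n x * (y - x))); auto.
    - apply (is_series_minus (fun n => T n y) (fun n => T n x)); apply f_series; auto.
    - eapply is_series_ext; [|apply (is_series_scal (y - x) _ D HD)].
      intros n. apply Cmult_comm.
    - intros n. destruct (HT' n x y) as (_ & _ & Hn); auto.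
      apply (Rmult_le_reg_l (r ^ 2)); [lra|]. field_simplify; lra. }
  apply (Rmult_le_compat_l (r ^ 2)) in Hb; [|lra].
  replace (r ^ 2 * (Series K * (Cmod (y - x) ^ 2 / r ^ 2)))%R
    with (Series K * Cmod (y - x) ^ 2)%R in Hb by (field; lra).
  exact Hb.
Qed.

Lemma ex_derive_series x : (Cmod x < r)%R -> ex_derive f x.
Proof.
  intros Hx. destruct (series_taylor_remainder x) as [D HD]; [lra|].
  exists D. apply (is_derive_of_remainder_le _ _ _ (r - Cmod x) (Series K / r ^ 2)); [lra|].
  intros y Hy.
  assert (Hy' : (Cmod y <= r)%R).
  { pose proof (Cmod_triangle x (y - x)). replace (x + (y - x)) with y in * by ring. lra. }
  specialize (HD y Hy'). assert (0 < r ^ 2)%R by (apply pow_lt; lra).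
  apply (Rmult_le_reg_l (r ^ 2)); [lra|].
  replace (r ^ 2 * (Series K / r ^ 2 * Cmod (y - x) ^ 2))%R
    with (Series K * Cmod (y - x) ^ 2)%R by (field; lra).
  exact HD.
Qed.

End DominatedSeries.

(** * Neighbourhoods in [C * C] *)

Lemma locally_prod_ball (p : C * C) (d : R) : (0 < d)%R ->
  locally (T := prod_UniformSpace C_UniformSpace C_UniformSpace) p
    (fun q => Cmod (fst q - fst p) < d /\ Cmod (snd q - snd p) < d)%R.
Proof.
  intros Hd.
  pose proof (norm_factor_gt_0 (K := C_AbsRing) (V := C_NormedModule)) as Hnf.
  assert (Hd' : (0 < d / norm_factor (K := C_AbsRing) (V := C_NormedModule))%R)
    by (apply Rdiv_lt_0_compat; lra).
  exists (mkposreal _ Hd'). intros q [H1 H2].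
  apply (norm_compat2 (K := C_AbsRing) (V := C_NormedModule)) in H1.
  apply (norm_compat2 (K := C_AbsRing) (V := C_NormedModule)) in H2.
  simpl in H1, H2.
  replace (norm_factor * (d / norm_factor))%R with d in H1, H2 by (field; lra).
  split; assumption.
Qed.

Lemma locally_polydisk (p : C * C) (r1 r2 : R) :
  (Cmod (fst p) < r1)%R -> (Cmod (snd p) < r2)%R ->
  locally (T := prod_UniformSpace C_UniformSpace C_UniformSpace) p
    (fun q => Cmod (fst q) <= r1 /\ Cmod (snd q) <= r2)%R.
Proof.
  destruct p as [p1 p2]. simpl. intros H1 H2.
  assert (Hd : (0 < Rmin (r1 - Cmod p1) (r2 - Cmod p2))%R) by (apply Rmin_pos; lra).
  eapply filter_imp; [|exact (locally_prod_ball (p1, p2) _ Hd)].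
  intros [q1 q2] [Hq1 Hq2]. simpl in *.
  pose proof (Rmin_l (r1 - Cmod p1) (r2 - Cmod p2)).
  pose proof (Rmin_r (r1 - Cmod p1) (r2 - Cmod p2)).
  pose proof (Cmod_triangle p1 (q1 - p1)). pose proof (Cmod_triangle p2 (q2 - p2)).
  replace (p1 + (q1 - p1)) with q1 in * by ring.
  replace (p2 + (q2 - p2)) with q2 in * by ring.
  split; lra.
Qed.

Lemma continuous_of_locally_lipschitz (F : C * C -> C) (p : C * C) (L : R) : (0 <= L)%R ->
  locally (T := prod_UniformSpace C_UniformSpace C_UniformSpace) p
    (fun q => Cmod (F q - F p) <= L * (Cmod (fst q - fst p) + Cmod (snd q - snd p)))%R ->
  continuous (T := prod_UniformSpace C_UniformSpace C_UniformSpace) (U := C_UniformSpace) F p.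
Proof.
  intros HL Hlip P [eps HP].
  assert (Hd : (0 < eps / (2 * L + 2))%R) by (apply Rdiv_lt_0_compat; [apply cond_pos|lra]).
  change (locally p (fun q => P (F q))).
  eapply filter_imp; [|exact (filter_and _ _ Hlip (locally_prod_ball p _ Hd))].
  intros q [Hq [H1 H2]]. apply HP.
  apply (norm_compat1 (K := C_AbsRing) (V := C_NormedModule)).
  change (Cmod (F q - F p) < eps)%R.
  pose proof (Cmod_ge_0 (fst q - fst p)). pose proof (Cmod_ge_0 (snd q - snd p)).
  assert (Heps : (eps / (2 * L + 2) * (2 * L + 2) = eps)%R) by (field; lra).
  nra.
Qed.

(** * The hyperlogarithm as a function of two variables *)

Definition hyperlog_term (phi : word) (n : nat) (z1 z2 : C) : C := coef phi z2 n * z1 ^ n.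

(* Where the series diverges, [iota] returns an unspecified value. *)
Definition hyperlog (phi : word) (p : C * C) : C :=
  iota (fun l : C_CompleteNormedModule =>
          is_series (fun n => hyperlog_term phi n (fst p) (snd p)) l).

Definition hyperlog_domain (p : C * C) : Prop := (Cmod (fst p) * Rmax 1 (Cmod (snd p)) < 1)%R.

Lemma hyperlog_domain_radii p : hyperlog_domain p ->
  exists r1 r2, (0 < r1)%R /\ (1 <= r2)%R /\ (Cmod (fst p) < r1)%R /\
                (Cmod (snd p) < r2)%R /\ (r1 * r2 < 1)%R.
Proof.
  unfold hyperlog_domain. intros H.
  set (a := Cmod (fst p)) in *. set (b := Rmax 1 (Cmod (snd p))) in *.
  assert (Ha : (0 <= a)%R) by apply Cmod_ge_0.
  assert (Hb : (1 <= b)%R) by apply Rmax_l.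
  assert (Hb2 : (Cmod (snd p) <= b)%R) by apply Rmax_r.
  set (e := ((1 - a * b) / (a + b + 2))%R).
  assert (He : (0 < e)%R) by (apply Rdiv_lt_0_compat; lra).
  assert (He2 : (e * (a + b + 2) = 1 - a * b)%R) by (unfold e; field; lra).
  assert (He3 : (e < 1)%R) by nra.
  exists (a + e)%R, (b + e)%R. repeat split; try lra. nra.
Qed.

Lemma hyperlog_domain_polydisk z1 z2 r1 r2 :
  (Cmod z1 <= r1)%R -> (Cmod z2 <= r2)%R -> (1 <= r2)%R -> (r1 * r2 < 1)%R ->
  hyperlog_domain (z1, z2).
Proof.
  intros H1 H2 H3 H4. unfold hyperlog_domain; simpl.
  assert (Rmax 1 (Cmod z2) <= r2)%R by (apply Rmax_lub; lra).
  pose proof (Cmod_ge_0 z1). pose proof (Rmax_l 1 (Cmod z2)).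
  nra.
Qed.

Section Polydisk.

Variables (phi : word) (r1 r2 : R).
Hypothesis r1_pos : (0 < r1)%R.
Hypothesis r2_ge1 : (1 <= r2)%R.
Hypothesis radii_lt : (r1 * r2 < 1)%R.

Lemma hyperlog_term_dominated_z1 z2 n : (Cmod z2 <= r2)%R ->
  taylor_dominated r1 (quad_geom (r1 * r2) n) (fun z => hyperlog_term phi n z z2).
Proof.
  intros Hz2. apply (poly_estimates_taylor_dominated _ _ (Cmod (coef phi z2 n) * 1)); try nra.
  - pose proof (Cmod_coef_le phi z2 n r2 r2_ge1 Hz2). pose proof (pow_le r1 n).
    rewrite Rpow_mult_distr. nra.
  - apply poly_estimates_scal, poly_estimates_pow. lra.
Qed.

Lemma hyperlog_term_dominated_z2 z1 n : (Cmod z1 <= r1)%R ->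
  taylor_dominated r2 (quad_geom (r1 * r2) n) (fun z => hyperlog_term phi n z1 z).
Proof.
  intros Hz1.
  apply (poly_estimates_taylor_dominated _ _ (Cmod (z1 ^ n) * 1)); try (nra).
  - rewrite Cmod_pow. rewrite Rpow_mult_distr.
    pose proof (pow_le r2 n). pose proof (pow_incr (Cmod z1) r1 n).
    pose proof (Cmod_ge_0 z1). nra.
  - apply (poly_estimates_ext _ _ _ (fun z => z1 ^ n * coef phi z n)).
    + intros z. apply Cmult_comm.
    + apply poly_estimates_scal, poly_estimates_coef, r2_ge1.
Qed.

Lemma is_series_hyperlog z1 z2 : (Cmod z1 <= r1)%R -> (Cmod z2 <= r2)%R ->
  is_series (fun n => hyperlog_term phi n z1 z2) (hyperlog phi (z1, z2)).
Proof.
  intros H1 H2.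
  destruct (ex_series_le (K := C_AbsRing) (V := C_CompleteNormedModule)
              (fun n => hyperlog_term phi n z1 z2) (quad_geom (r1 * r2))) as [l Hl].
  - intros n. change (Cmod (hyperlog_term phi n z1 z2) <= quad_geom (r1 * r2) n)%R.
    unfold hyperlog_term, quad_geom. rewrite Cmod_mult, Cmod_pow, Rpow_mult_distr, !S_INR.
    pose proof (Cmod_coef_le phi z2 n r2 r2_ge1 H2).
    pose proof (pow_incr (Cmod z1) r1 n). pose proof (Cmod_ge_0 z1). pose proof (pos_INR n).
    pose proof (pow_le (Cmod z1) n (Cmod_ge_0 z1)). pose proof (Cmod_ge_0 (coef phi z2 n)).
    assert (0 <= (r1 ^ n * r2 ^ n))%R by (apply Rmult_le_pos; apply pow_le; lra).
    assert (Cmod (coef phi z2 n) * Cmod z1 ^ n <= r1 ^ n * r2 ^ n)%R by nra.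
    nra.
  - apply ex_series_quad_geom; nra.
  - replace (hyperlog phi (z1, z2)) with l; [exact Hl|]. symmetry.
    exact (iota_filterlim_locally (K := C_AbsRing) (V := C_CompleteNormedModule)
             (F := eventually) (sum_n (fun n => hyperlog_term phi n z1 z2)) l Hl).
Qed.

Lemma hyperlog_lipschitz p p' :
  (Cmod (fst p) <= r1)%R -> (Cmod (snd p) <= r2)%R ->
  (Cmod (fst p') <= r1)%R -> (Cmod (snd p') <= r2)%R ->
  (Cmod (hyperlog phi p' - hyperlog phi p) <=
   Series (quad_geom (r1 * r2)) * (/ r1 + / r2) * (Cmod (fst p' - fst p) + Cmod (snd p' - snd p)))%R.
Proof.
  destruct p as [x1 x2], p' as [y1 y2]. simpl. intros Hx1 Hx2 Hy1 Hy2.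
  assert (H1 : (r1 * Cmod (hyperlog phi (y1, y2) - hyperlog phi (x1, y2))
                <= Series (quad_geom (r1 * r2)) * Cmod (y1 - x1))%R).
  { apply (series_lipschitz (fun n z => hyperlog_term phi n z y2) (fun z => hyperlog phi (z, y2))); auto.
    - apply ex_series_quad_geom; nra.
    - intros y Hy. apply is_series_hyperlog; auto.
    - intros n. apply hyperlog_term_dominated_z1; auto. }
  assert (H2 : (r2 * Cmod (hyperlog phi (x1, y2) - hyperlog phi (x1, x2))
                <= Series (quad_geom (r1 * r2)) * Cmod (y2 - x2))%R).
  { apply (series_lipschitz (fun n z => hyperlog_term phi n x1 z) (fun z => hyperlog phi (x1, z))); auto; [lra| | |].
    - apply ex_series_quad_geom; nra.
    - intros y Hy. apply is_series_hyperlog; auto.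
    - intros n. apply hyperlog_term_dominated_z2; auto. }
  pose proof (Cmod_triangle (hyperlog phi (y1, y2) - hyperlog phi (x1, y2))
                            (hyperlog phi (x1, y2) - hyperlog phi (x1, x2))).
  replace (hyperlog phi (y1, y2) - hyperlog phi (x1, y2) + (hyperlog phi (x1, y2) - hyperlog phi (x1, x2)))
    with (hyperlog phi (y1, y2) - hyperlog phi (x1, x2)) in * by ring.
  assert (0 <= Series (quad_geom (r1 * r2)))%R by (apply Series_quad_geom_ge0; nra).
  pose proof (Cmod_ge_0 (y1 - x1)). pose proof (Cmod_ge_0 (y2 - x2)).
  assert (0 < / r1)%R by (apply Rinv_0_lt_compat; lra).
  assert (0 < / r2)%R by (apply Rinv_0_lt_compat; lra).
  apply (Rmult_le_compat_l (/ r1)) in H1; [|lra].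
  apply (Rmult_le_compat_l (/ r2)) in H2; [|lra].
  rewrite <- Rmult_assoc, Rinv_l in H1, H2 by lra.
  assert (0 <= / r1 * (Series (quad_geom (r1 * r2)) * Cmod (y2 - x2)))%R
    by (repeat apply Rmult_le_pos; lra).
  assert (0 <= / r2 * (Series (quad_geom (r1 * r2)) * Cmod (y1 - x1)))%R
    by (repeat apply Rmult_le_pos; lra).
  lra.
Qed.

End Polydisk.

Lemma holomorphic2_hyperlog phi : holomorphic2_on hyperlog_domain (hyperlog phi).
Proof.
  split.
  - intros p Hp. destruct (hyperlog_domain_radii p Hp) as (r1 & r2 & Hr1 & Hr2 & H1 & H2 & H12).
    eapply filter_imp; [|exact (locally_polydisk p r1 r2 H1 H2)].
    intros [q1 q2] [Hq1 Hq2]. apply (hyperlog_domain_polydisk _ _ r1 r2); auto.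
  - intros [p1 p2] Hp. destruct (hyperlog_domain_radii _ Hp) as (r1 & r2 & Hr1 & Hr2 & H1 & H2 & H12).
    simpl in H1, H2 |- *. repeat split.
    + apply (continuous_of_locally_lipschitz _ _ (Series (quad_geom (r1 * r2)) * (/ r1 + / r2))).
      * pose proof (Series_quad_geom_ge0 (r1 * r2)).
        assert (0 < / r1)%R by (apply Rinv_0_lt_compat; lra).
        assert (0 < / r2)%R by (apply Rinv_0_lt_compat; lra).
        apply Rmult_le_pos; nra.
      * eapply filter_imp; [|exact (locally_polydisk (p1, p2) r1 r2 H1 H2)].
        intros q [Hq1 Hq2]. apply hyperlog_lipschitz; simpl; auto; lra.
    + apply (ex_derive_series (fun n z => hyperlog_term phi n z p2) _ r1 (quad_geom (r1 * r2))); auto.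
      * apply ex_series_quad_geom; nra.
      * intros y Hy. apply (is_series_hyperlog phi r1 r2); auto; lra.
      * intros n. apply hyperlog_term_dominated_z1; auto; lra.
    + apply (ex_derive_series (fun n z => hyperlog_term phi n p1 z) _ r2 (quad_geom (r1 * r2))); auto; try lra.
      * apply ex_series_quad_geom; nra.
      * intros y Hy. apply (is_series_hyperlog phi r1 r2); auto; lra.
      * intros n. apply hyperlog_term_dominated_z2; auto; lra.
Qed.

Theorem proposition7p2 (phi : word) :
  exists U : C * C -> Prop,
    (forall z1 z2 : C, (Cmod z1 < 1)%R -> (Cmod z2 < 1)%R -> U (z1, z2)) /\
    U (RtoC 0, RtoC 1) /\
    exists F : C * C -> C,
      holomorphic2_on U F /\
      (forall z1 z2 : C, (Cmod z1 < 1)%R -> (Cmod z2 < 1)%R ->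
         is_hyperlog phi z1 z2 (F (z1, z2))) /\
      (exists eps : R, (0 < eps)%R /\
         forall (z1 : C) (t : R), (Cmod z1 < eps)%R -> (0 <= t <= 1)%R ->
           U (z1, RtoC t)).
Proof.
  exists hyperlog_domain. split; [|split].
  - intros z1 z2 H1 H2. apply (hyperlog_domain_polydisk z1 z2 (Cmod z1) 1); lra.
  - unfold hyperlog_domain. simpl. rewrite Cmod_0. lra.
  - exists (hyperlog phi). split; [apply holomorphic2_hyperlog|split].
    + intros z1 z2 H1 H2. pose proof (Cmod_ge_0 z1).
      apply (is_series_hyperlog phi ((Cmod z1 + 1) / 2) 1); lra.
    + exists (1 / 2)%R. split; [lra|]. intros z1 t H1 H2.
      apply (hyperlog_domain_polydisk z1 t (1 / 2) 1); try lra.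
      rewrite Cmod_R, Rabs_right; lra.
Qed.
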